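(* Suppose $(P,n,a,b)$ is good. Then there exists $f\in\mathcal{B}$ whose initial part (the sum of its terms of degree at most $n$) is $P$, and such that $f$ has a zero of order at least two in $(a,b)$.
   Context: $\mathcal{B}=\{1+\sum_{k=1}^\infty a_k x^k : a_k\in\{-1,0,1\}\}$ and $\mathcal{B}_n$ is the set of polynomials $1+\sum_{k=1}^n a_kx^k$ with $a_k\in\{-1,0,1\}$. A quadruple $(P,n,a,b)$ is called good if $P\in\mathcal{B}_n$, $0.5<a<b<1$, $P(a)>a^{n+1}/(1-a)$, $P(b)>b^{n+1}/(1-b)$, $P(x)>0$ for all $x\in[a,b]$, and there exists $x\in(a,b)$ with $P(x)<x^{n+1}/(1-x)$. *)

From Stdlib Require Import Reals Lra Lia.
From Coquelicot Require Import Coquelicot.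
Open Scope R_scope.

Definition trit (c : R) : Prop := c = -1 \/ c = 0 \/ c = 1.

(* Coefficient sequences of elements of \mathcal{B}: 1 + sum_{k>=1} a_k x^k *)
Definition in_B (a : nat -> R) : Prop :=
  a 0%nat = 1 /\ (forall k : nat, (1 <= k)%nat -> trit (a k)).

Definition in_Bn (n : nat) (p : nat -> R) : Prop :=
  p 0%nat = 1 /\ (forall k : nat, (1 <= k <= n)%nat -> trit (p k))
  /\ (forall k : nat, (n < k)%nat -> p k = 0).

Definition peval (n : nat) (p : nat -> R) (x : R) : R :=
  sum_n (fun k => p k * x ^ k) n.

Definition fseries (a : nat -> R) (x : R) : R := PSeries a x.

Definition good (p : nat -> R) (n : nat) (a b : R) : Prop :=
  in_Bn n p /\ 0.5 < a /\ a < b /\ b < 1 /\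
  peval n p a > a ^ (n + 1) / (1 - a) /\
  peval n p b > b ^ (n + 1) / (1 - b) /\
  (forall x, a <= x <= b -> peval n p x > 0) /\
  (exists x, a < x < b /\ peval n p x < x ^ (n + 1) / (1 - x)).

(* Among the extensions of P in B whose sum is nonnegative on [a, b] (a closed, hence compact,
   set of coefficient sequences) take the lexicographically least one, f.  If f had no zero on
   [a, b] it would be positive there, and minimality would force every coefficient beyond degree
   n to be -1: a far-out coefficient can be lowered outright, and a coefficient followed by a
   tail of -1's can be lowered once that tail is raised to 1's, since x^k <= 2 x^(k+1) / (1 - x)
   for x >= 1/3.  But then f(y) = P(y) - y^(n+1) / (1 - y) < 0.  So f touches 0 at some x0 in
   [a, b]; as f(x) >= P(x) - x^(n+1) / (1 - x) > 0 at the endpoints, x0 is an interior minimum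
   of f, hence a zero of order at least two. *)

From Stdlib Require Import Reals Lra Lia Arith ClassicalEpsilon.
From Coquelicot Require Import Coquelicot.
Open Scope R_scope.

Definition bounded_seq (d : nat -> R) : Prop := exists M, forall i, Rabs (d i) <= M.
Definition ones_from (k i : nat) : R := if (k <=? i)%nat then 1 else 0.
Definition delta (k i : nat) : R := if (i =? k)%nat then 1 else 0.

Lemma bounded_seq_plus d e : bounded_seq d -> bounded_seq e -> bounded_seq (fun i => d i + e i).
Proof.
  intros [M HM] [N HN]; exists (M + N); intros i.
  eapply Rle_trans; [apply Rabs_triang |]. specialize (HM i); specialize (HN i); lra.
Qed.

Lemma bounded_seq_scal c d : bounded_seq d -> bounded_seq (fun i => c * d i).
Proof.
  intros [M HM]; exists (Rabs c * M); intros i. rewrite Rabs_mult.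
  apply Rmult_le_compat_l; [apply Rabs_pos | apply HM].
Qed.

Lemma bounded_seq_trit d : (forall i, trit (d i)) -> bounded_seq d.
Proof.
  intros H; exists 1; intros i; apply Rabs_le.
  destruct (H i) as [-> | [-> | ->]]; lra.
Qed.

Lemma bounded_seq_ones_from k : bounded_seq (ones_from k).
Proof. apply bounded_seq_trit; intros i; unfold ones_from, trit; destruct (k <=? i)%nat; auto. Qed.

Lemma bounded_seq_delta k : bounded_seq (delta k).
Proof. apply bounded_seq_trit; intros i; unfold delta, trit; destruct (i =? k)%nat; auto. Qed.

Lemma CV_radius_bounded_seq d x : bounded_seq d -> Rabs x < 1 -> Rbar_lt (Rabs x) (CV_radius d).
Proof.
  intros [M HM] Hx. apply Rbar_lt_le_trans with (Finite 1); [exact Hx |].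
  apply (proj1 (CV_radius_bounded d)). exists M; intros i.
  rewrite pow1, Rmult_1_r. apply HM.
Qed.

Lemma ex_pseries_bounded_seq d x : bounded_seq d -> Rabs x < 1 -> ex_pseries d x.
Proof. intros; apply CV_radius_inside, CV_radius_bounded_seq; auto. Qed.

Lemma PSeries_plus_bounded d e x : bounded_seq d -> bounded_seq e -> Rabs x < 1 ->
  PSeries (fun i => d i + e i) x = PSeries d x + PSeries e x.
Proof.
  intros Hd He Hx. rewrite <- PSeries_plus by (apply ex_pseries_bounded_seq; auto).
  apply PSeries_ext; reflexivity.
Qed.

Lemma PSeries_scal_seq c d x : PSeries (fun i => c * d i) x = c * PSeries d x.
Proof. rewrite <- PSeries_scal. apply PSeries_ext; reflexivity. Qed.

Lemma PSeries_nonneg d x : bounded_seq d -> 0 <= x < 1 -> (forall i, 0 <= d i) ->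
  0 <= PSeries d x.
Proof.
  intros Hd Hx Hpos. rewrite <- (PSeries_const_0 x). apply Series_le.
  - intros k; rewrite Rmult_0_l; split; [lra |].
    apply Rmult_le_pos; [apply Hpos | apply pow_le; lra].
  - eapply ex_series_ext; [| apply (ex_pseries_bounded_seq d x Hd); rewrite Rabs_pos_eq; lra].
    intros k; unfold scal; simpl; unfold mult; simpl; rewrite pow_n_pow; ring.
Qed.

Lemma PSeries_le_bounded d e x : bounded_seq d -> bounded_seq e -> 0 <= x < 1 ->
  (forall i, d i <= e i) -> PSeries d x <= PSeries e x.
Proof.
  intros Hd He Hx Hle.
  assert (Hx' : Rabs x < 1) by (rewrite Rabs_pos_eq; lra).
  assert (Hdiff : 0 <= PSeries (fun i => e i + (-1) * d i) x).
  { apply PSeries_nonneg; auto using bounded_seq_plus, bounded_seq_scal.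
    intros i; specialize (Hle i); lra. }
  rewrite PSeries_plus_bounded, PSeries_scal_seq in Hdiff by auto using bounded_seq_scal.
  lra.
Qed.

Lemma PSeries_ones_from k x : 0 <= x < 1 -> PSeries (ones_from k) x = x ^ k / (1 - x).
Proof.
  intros Hx.
  rewrite (PSeries_decr_n_aux (ones_from k) k x).
  2:{ intros j Hj. unfold ones_from. destruct (Nat.leb_spec k j); [lia | reflexivity]. }
  rewrite (PSeries_ext _ (fun _ => 1)).
  2:{ intros j. unfold PS_decr_n, ones_from.
      destruct (Nat.leb_spec k (k + j)); [reflexivity | lia]. }
  unfold PSeries. rewrite (Series_ext _ (fun j => x ^ j)) by (intros; ring).
  rewrite Series_geom by (rewrite Rabs_pos_eq; lra). reflexivity.
Qed.

Lemma PSeries_delta k x : 0 <= x < 1 -> PSeries (delta k) x = x ^ k.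
Proof.
  intros Hx.
  assert (Hx' : Rabs x < 1) by (rewrite Rabs_pos_eq; lra).
  rewrite (PSeries_ext _ (fun i => ones_from k i + (-1) * ones_from (S k) i)).
  2:{ intros i. unfold delta, ones_from.
      destruct (Nat.eqb_spec i k), (Nat.leb_spec k i), (Nat.leb_spec (S k) i); try lia; ring. }
  rewrite PSeries_plus_bounded, PSeries_scal_seq, !PSeries_ones_from
    by auto using bounded_seq_ones_from, bounded_seq_scal.
  simpl. field. lra.
Qed.

Lemma PSeries_add_ones_from d c k x : bounded_seq d -> 0 <= x < 1 ->
  PSeries (fun i => d i + c * ones_from k i) x = PSeries d x + c * (x ^ k / (1 - x)).
Proof.
  intros Hd Hx.
  rewrite PSeries_plus_bounded, PSeries_scal_seq, PSeries_ones_from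
    by (auto using bounded_seq_scal, bounded_seq_ones_from; rewrite Rabs_pos_eq; lra).
  reflexivity.
Qed.

Lemma PSeries_add_delta d c k x : bounded_seq d -> 0 <= x < 1 ->
  PSeries (fun i => d i + c * delta k i) x = PSeries d x + c * x ^ k.
Proof.
  intros Hd Hx.
  rewrite PSeries_plus_bounded, PSeries_scal_seq, PSeries_delta
    by (auto using bounded_seq_scal, bounded_seq_delta; rewrite Rabs_pos_eq; lra).
  reflexivity.
Qed.

Lemma PSeries_peval n d x : bounded_seq d -> (forall k, (n < k)%nat -> d k = 0) -> Rabs x < 1 ->
  PSeries d x = peval n d x.
Proof.
  intros Hd Hz Hx.
  rewrite (PSeries_decr_n d n x) by (apply ex_pseries_bounded_seq; auto).
  rewrite (PSeries_ext (PS_decr_n d (S n)) (fun _ => 0)).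
  2:{ intros j. unfold PS_decr_n. apply Hz. lia. }
  rewrite PSeries_const_0, Rmult_0_r, Rplus_0_r.
  unfold peval. rewrite sum_n_Reals. reflexivity.
Qed.

Definition agree_below (k : nat) (g h : nat -> R) : Prop :=
  forall i, (i < k)%nat -> h i = g i.

Section LexMin.

Variable X : (nat -> R) -> Prop.
Hypothesis X_trit : forall h i, X h -> trit (h i).
Hypothesis X_closed : forall c, (forall k, exists h, X h /\ agree_below k c h) -> X c.

Definition lex_min_at (g : nat -> R) (k : nat) (h : nat -> R) : Prop :=
  X h /\ agree_below k g h /\ forall h', X h' -> agree_below k g h' -> h k <= h' k.

Lemma lex_min_at_exists g k : X g -> exists h, lex_min_at g k h.
Proof.
  intros Hg.
  destruct (classic (exists h, X h /\ agree_below k g h /\ h k = -1)) as [[h [Hh [Hag Hk]]] | Nm1].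
  { exists h; repeat split; auto. intros h' Hh' _.
    rewrite Hk. destruct (X_trit h' k Hh') as [-> | [-> | ->]]; lra. }
  destruct (classic (exists h, X h /\ agree_below k g h /\ h k = 0)) as [[h [Hh [Hag Hk]]] | N0].
  { exists h; repeat split; auto. intros h' Hh' Hag'.
    rewrite Hk. destruct (X_trit h' k Hh') as [E | [-> | ->]]; try lra.
    exfalso; apply Nm1; eauto. }
  exists g; split; [exact Hg | split; [intros i _; reflexivity |]].
  intros h' Hh' Hag'. destruct (X_trit h' k Hh') as [E | [E | ->]].
  - exfalso; apply Nm1; eauto.
  - exfalso; apply N0; eauto.
  - destruct (X_trit g k Hg) as [-> | [-> | ->]]; lra.
Qed.

Fixpoint greedy (g : nat -> R) (k : nat) : nat -> R :=
  match k with
  | O => g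
  | S k' => epsilon (inhabits g) (lex_min_at (greedy g k') k')
  end.

Lemma greedy_spec g : X g -> forall k,
  X (greedy g k) /\ lex_min_at (greedy g k) k (greedy g (S k)).
Proof.
  intros Hg k. assert (Hk : X (greedy g k)).
  { induction k as [| k IH]; [exact Hg |].
    exact (proj1 (epsilon_spec (inhabits g) _ (lex_min_at_exists _ k IH))). }
  split; [exact Hk |]. exact (epsilon_spec (inhabits g) _ (lex_min_at_exists _ k Hk)).
Qed.

Lemma greedy_agree g : X g -> forall k m, (k <= m)%nat -> agree_below k (greedy g k) (greedy g m).
Proof.
  intros Hg k m Hkm. induction Hkm as [| m Hkm IH]; [intros i _; reflexivity |].
  intros i Hi. destruct (greedy_spec g Hg m) as [_ [_ [Hag _]]].
  rewrite Hag by lia. apply IH, Hi.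
Qed.

Theorem lex_min_exists : (exists g, X g) ->
  exists c, X c /\ forall k h, X h -> agree_below k c h -> c k <= h k.
Proof.
  intros [g Hg].
  set (c i := greedy g (S i) i).
  assert (Hc : forall k, agree_below k c (greedy g k)).
  { intros k i Hi. apply (greedy_agree g Hg (S i) k Hi). lia. }
  exists c; split.
  - apply X_closed. intros k. exists (greedy g k). split; [apply greedy_spec; auto | apply Hc].
  - intros k h Hh Hag. destruct (greedy_spec g Hg k) as [_ [_ [_ Hmin]]].
    apply Hmin; [exact Hh |]. intros i Hi. rewrite Hag, (Hc k i) by exact Hi. reflexivity.
Qed.

End LexMin.

Lemma nat_downward_ind (P : nat -> Prop) (K : nat) :
  (forall k, (K <= k)%nat -> P k) -> (forall k, (forall i, (k < i)%nat -> P i) -> P k) ->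
  forall k, P k.
Proof.
  intros Hbase Hstep k.
  assert (H : forall d j, (K - j <= d)%nat -> P j).
  { induction d as [| d IH]; intros j Hj.
    - apply Hbase; lia.
    - apply Hstep; intros i Hi; apply IH; lia. }
  apply (H (K - k)%nat); lia.
Qed.

Lemma nonneg_of_geometric_slack u C x : 0 <= x < 1 -> (forall N, - (C * x ^ N) <= u) -> 0 <= u.
Proof.
  intros Hx Hslack. destruct (Rle_lt_dec 0 u) as [| Hneg]; [assumption | exfalso].
  assert (HC : 0 < C) by (specialize (Hslack O); simpl in Hslack; lra).
  destruct (pow_lt_1_zero x ltac:(rewrite Rabs_pos_eq; lra) (- u / C)) as [N HN].
  { apply Rdiv_lt_0_compat; lra. }
  specialize (HN N (le_n N)). rewrite Rabs_pos_eq in HN by (apply pow_le; lra).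
  specialize (Hslack N). apply Rmult_lt_compat_l with (r := C) in HN; [| exact HC].
  replace (C * (- u / C)) with (- u) in HN by (field; lra). lra.
Qed.

Lemma is_derive_interior_min (f : R -> R) (a b x0 l : R) : a < x0 < b ->
  (forall z, a < z < b -> f x0 <= f z) -> is_derive f x0 l -> l = 0.
Proof.
  intros Hx Hmin Hd. apply is_derive_Reals in Hd.
  exact (deriv_minimum f a b x0 (exist _ l Hd) (proj1 Hx) (proj2 Hx)
           (fun z H1 H2 => Hmin z (conj H1 H2))).
Qed.

Section Admissible.

Variables (p : nat -> R) (n : nat) (a b : R).
Hypothesis p_in_Bn : in_Bn n p.
Hypothesis a_ge_third : / 3 <= a.
Hypothesis b_lt_1 : b < 1.

Definition extends (g : nat -> R) : Prop :=
  (forall k, (k <= n)%nat -> g k = p k) /\ (forall k, (n < k)%nat -> trit (g k)).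

Definition admissible (g : nat -> R) : Prop :=
  extends g /\ forall x, a <= x <= b -> 0 <= PSeries g x.

Lemma interval_in_unit x : a <= x <= b -> 0 <= x < 1.
Proof. lra. Qed.

Lemma p_trit k : trit (p k).
Proof.
  destruct p_in_Bn as [H0 [Htrit Hzero]]. destruct k as [| k].
  - rewrite H0; right; right; reflexivity.
  - destruct (le_lt_dec (S k) n).
    + apply Htrit; lia.
    + rewrite Hzero by lia; right; left; reflexivity.
Qed.

Lemma extends_trit g k : extends g -> trit (g k).
Proof.
  intros [Hpre Htail]. destruct (le_lt_dec k n).
  - rewrite Hpre by assumption; apply p_trit.
  - apply Htail; assumption.
Qed.

Lemma admissible_trit g k : admissible g -> trit (g k).
Proof. intros [Hg _]; apply extends_trit, Hg. Qed.

Lemma extends_in_B g : extends g -> in_B g.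
Proof.
  intros Hg. split; [| intros k _; apply extends_trit, Hg].
  rewrite (proj1 Hg) by lia. apply p_in_Bn.
Qed.

Lemma PSeries_p x : Rabs x < 1 -> PSeries p x = peval n p x.
Proof.
  apply PSeries_peval; [apply bounded_seq_trit, p_trit | apply p_in_Bn].
Qed.

Lemma PSeries_extends_ge g x : extends g -> 0 <= x < 1 ->
  peval n p x - x ^ (n + 1) / (1 - x) <= PSeries g x.
Proof.
  intros Hg Hx.
  rewrite <- PSeries_p, Nat.add_1_r by (rewrite Rabs_pos_eq; lra).
  replace (PSeries p x - x ^ S n / (1 - x))
    with (PSeries (fun i => p i + (-1) * ones_from (S n) i) x)
    by (rewrite PSeries_add_ones_from by auto using bounded_seq_trit, p_trit; ring).
  apply PSeries_le_bounded; auto using bounded_seq_plus, bounded_seq_scal, bounded_seq_ones_from,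
    bounded_seq_trit, p_trit, extends_trit.
  intros i. unfold ones_from. destruct (Nat.leb_spec (S n) i).
  - rewrite (proj2 (proj2 p_in_Bn)) by lia.
    destruct (extends_trit g i Hg) as [-> | [-> | ->]]; lra.
  - rewrite (proj1 Hg) by lia; lra.
Qed.

Lemma p_admissible : (forall x, a <= x <= b -> 0 < peval n p x) -> admissible p.
Proof.
  intros Hpos. split.
  - split; [reflexivity |]. intros k _; apply p_trit.
  - intros x Hx. rewrite PSeries_p by (rewrite Rabs_pos_eq; lra).
    apply Rlt_le, Hpos, Hx.
Qed.

(* Admissible sequences agreeing with [c] on longer and longer prefixes differ from [c] by
   at most [2 x^N / (1 - x)], which tends to 0. *)
Lemma admissible_closed c :
  (forall k, exists h, admissible h /\ agree_below k c h) -> admissible c.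
Proof.
  intros Happrox.
  assert (Hc : extends c).
  { split; intros k Hk; destruct (Happrox (S k)) as [h [[[Hpre Htail] _] Hag]];
      rewrite <- (Hag k) by lia; auto. }
  split; [exact Hc |]. intros x Hx. pose proof (interval_in_unit x Hx) as Hx1.
  apply (nonneg_of_geometric_slack _ (2 / (1 - x)) x Hx1). intros N.
  destruct (Happrox N) as [h [[Hh Hh_pos] Hag]].
  apply Rle_trans with (PSeries (fun i => h i + (-2) * ones_from N i) x).
  - rewrite PSeries_add_ones_from by auto using bounded_seq_trit, extends_trit.
    specialize (Hh_pos x Hx). unfold Rdiv. lra.
  - apply PSeries_le_bounded; auto using bounded_seq_plus, bounded_seq_scal, bounded_seq_ones_from,
      bounded_seq_trit, extends_trit.
    intros i. unfold ones_from. destruct (Nat.leb_spec N i).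
    + destruct (extends_trit h i Hh) as [-> | [-> | ->]];
        destruct (extends_trit c i Hc) as [-> | [-> | ->]]; lra.
    + rewrite Hag by lia; lra.
Qed.

Section LexMinAdmissible.

Variable c : nat -> R.
Hypothesis c_admissible : admissible c.
Hypothesis c_lex_min : forall k h, admissible h -> agree_below k c h -> c k <= h k.

Lemma c_bounded : bounded_seq c.
Proof. apply bounded_seq_trit; intros k; apply admissible_trit, c_admissible. Qed.

(* Lowering a far-out coefficient to [-1] changes the sum by at most [2 b^k], which is below
   the positive minimum of the sum on [a, b]. *)
Lemma lex_min_eventually_minus_one : a <= b -> (forall x, a <= x <= b -> 0 < PSeries c x) ->
  exists K, forall k, (K <= k)%nat -> c k = -1.
Proof.
  intros Hab Hpos.
  destruct (continuity_ab_min (PSeries c) a b Hab) as [xm [Hmin Hxm]].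
  { intros z Hz. apply PSeries_continuity, CV_radius_bounded_seq; [apply c_bounded |].
    rewrite Rabs_pos_eq; lra. }
  set (m := PSeries c xm). assert (Hm : 0 < m) by (apply Hpos, Hxm).
  destruct (pow_lt_1_zero b ltac:(rewrite Rabs_pos_eq; lra) (m / 2) ltac:(lra)) as [K HK].
  exists (Nat.max K (S n)). intros k Hk.
  set (h i := c i + (-1 - c k) * delta k i).
  assert (Hh_eq : forall i, i <> k -> h i = c i).
  { intros i Hi. unfold h, delta. destruct (Nat.eqb_spec i k); [contradiction | ring]. }
  assert (Hhk : h k = -1) by (unfold h, delta; rewrite Nat.eqb_refl; ring).
  assert (Hh : admissible h).
  { split; [split |].
    - intros i Hi. rewrite Hh_eq by lia. apply c_admissible, Hi.
    - intros i _. destruct (Nat.eq_dec i k) as [-> | Hne].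
      + rewrite Hhk; left; reflexivity.
      + rewrite Hh_eq by exact Hne. apply admissible_trit, c_admissible.
    - intros z Hz. unfold h. rewrite PSeries_add_delta by (apply c_bounded || lra).
      specialize (HK k ltac:(lia)). rewrite Rabs_pos_eq in HK by (apply pow_le; lra).
      assert (z ^ k <= b ^ k) by (apply pow_incr; lra).
      assert (0 <= z ^ k) by (apply pow_le; lra).
      specialize (Hmin z Hz). fold m in Hmin.
      destruct (admissible_trit c k c_admissible) as [-> | [-> | ->]]; nra. }
  assert (Hle := c_lex_min k h Hh ltac:(intros i Hi; apply Hh_eq; lia)).
  rewrite Hhk in Hle. pose proof (admissible_trit c k c_admissible) as Hck.
  unfold trit in Hck. lra.
Qed.

(* If the tail of [c] beyond [k] is all [-1], replacing [c k] by [c k - 1] and that tail by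
   all [1] changes the sum by [- z^k + 2 z^(k+1) / (1 - z)], which is [>= 0] as [z >= 1/3]. *)
Lemma lex_min_tail_step k : (n < k)%nat -> (forall i, (k < i)%nat -> c i = -1) -> c k = -1.
Proof.
  intros Hk Htail.
  destruct (admissible_trit c k c_admissible) as [Hck | Hck]; [exact Hck | exfalso].
  set (h i := c i + (-1) * delta k i + 2 * ones_from (S k) i).
  assert (Hh_below : forall i, (i < k)%nat -> h i = c i).
  { intros i Hi. unfold h, delta, ones_from.
    destruct (Nat.eqb_spec i k), (Nat.leb_spec (S k) i); try lia; ring. }
  assert (Hhk : h k = c k - 1).
  { unfold h, delta, ones_from. rewrite Nat.eqb_refl.
    destruct (Nat.leb_spec (S k) k); [lia | ring]. }
  assert (Hh_above : forall i, (k < i)%nat -> h i = 1).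
  { intros i Hi. unfold h, delta, ones_from. rewrite Htail by exact Hi.
    destruct (Nat.eqb_spec i k), (Nat.leb_spec (S k) i); try lia; ring. }
  assert (Hh : admissible h).
  { split; [split |].
    - intros i Hi. rewrite Hh_below by lia. apply c_admissible, Hi.
    - intros i _. destruct (lt_eq_lt_dec i k) as [[Hi | ->] | Hi].
      + rewrite Hh_below by exact Hi. apply admissible_trit, c_admissible.
      + rewrite Hhk. destruct Hck as [-> | ->]; [left | right; left]; ring.
      + rewrite Hh_above by exact Hi. right; right; reflexivity.
    - intros z Hz. pose proof (interval_in_unit z Hz) as Hz1.
      unfold h. rewrite PSeries_add_ones_from, PSeries_add_delta
        by auto using bounded_seq_plus, bounded_seq_scal, bounded_seq_delta, c_bounded.
      assert (Hgeom : z ^ k <= 2 * (z ^ S k / (1 - z))).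
      { simpl. assert (0 <= z ^ k) by (apply pow_le; lra).
        apply Rmult_le_reg_r with (1 - z); [lra |].
        replace (2 * (z * z ^ k / (1 - z)) * (1 - z)) with (2 * z * z ^ k) by (field; lra).
        nra. }
      pose proof (proj2 c_admissible z Hz). lra. }
  assert (Hle := c_lex_min k h Hh Hh_below). lra.
Qed.

Lemma lex_min_tail : a <= b -> (forall x, a <= x <= b -> 0 < PSeries c x) ->
  forall k, (n < k)%nat -> c k = -1.
Proof.
  intros Hab Hpos. destruct (lex_min_eventually_minus_one Hab Hpos) as [K HK].
  apply (nat_downward_ind (fun k => (n < k)%nat -> c k = -1) K).
  - intros k Hk _; apply HK, Hk.
  - intros k IH Hk. apply lex_min_tail_step; [exact Hk |].
    intros i Hi. apply IH; lia.
Qed.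

Lemma lex_min_has_root :
  (exists y, a <= y <= b /\ peval n p y < y ^ (n + 1) / (1 - y)) ->
  exists x0, a <= x0 <= b /\ PSeries c x0 = 0.
Proof.
  intros [y [Hy Hneg]].
  apply NNPP; intros Hno.
  assert (Hpos : forall x, a <= x <= b -> 0 < PSeries c x).
  { intros x Hx. destruct (proj2 c_admissible x Hx) as [| E]; [assumption |].
    exfalso; apply Hno; exists x; auto. }
  pose proof (lex_min_tail ltac:(lra) Hpos) as Htail.
  pose proof (proj2 c_admissible y Hy) as Hcy.
  rewrite (PSeries_ext c (fun i => p i + (-1) * ones_from (S n) i)) in Hcy.
  2:{ intros i. unfold ones_from. destruct (Nat.leb_spec (S n) i).
      - rewrite Htail, (proj2 (proj2 p_in_Bn)) by lia. ring.
      - rewrite (proj1 (proj1 c_admissible)) by lia. ring. }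
  rewrite PSeries_add_ones_from, PSeries_p in Hcy
    by (auto using bounded_seq_trit, p_trit; rewrite ?Rabs_pos_eq; lra).
  rewrite Nat.add_1_r in Hneg. lra.
Qed.

End LexMinAdmissible.

End Admissible.

Theorem corollary3p2 (p : nat -> R) (n : nat) (a b : R) :
  good p n a b ->
  exists f : nat -> R,
    in_B f /\ (forall k : nat, (k <= n)%nat -> f k = p k) /\
    exists x0 : R, a < x0 < b /\ fseries f x0 = 0 /\ is_derive (fseries f) x0 0.
Proof.
  intros [Hp [Ha [Hab [Hb [HPa [HPb [Hpos Hdip]]]]]]].
  assert (Ha3 : / 3 <= a) by lra.
  destruct (lex_min_exists (admissible p n a b) (admissible_trit p n a b Hp)
              (admissible_closed p n a b Hp Ha3 Hb)
              (ex_intro _ p (p_admissible p n a b Hp Ha3 Hb Hpos))) as [c [Hc Hmin]].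
  destruct (lex_min_has_root p n a b Hp Ha3 Hb c Hc Hmin
              ltac:(destruct Hdip as [y Hy]; exists y; lra)) as [x0 [Hx0 Hroot]].
  pose proof (PSeries_extends_ge p n Hp c a (proj1 Hc) ltac:(lra)) as Hca.
  pose proof (PSeries_extends_ge p n Hp c b (proj1 Hc) ltac:(lra)) as Hcb.
  assert (Hx0' : a < x0 < b).
  { assert (x0 <> a) by (intros ->; lra). assert (x0 <> b) by (intros ->; lra). lra. }
  exists c. split; [apply (extends_in_B p n Hp), Hc |]. split; [apply Hc |].
  exists x0. split; [exact Hx0' |]. unfold fseries. split; [exact Hroot |].
  assert (Hd := is_derive_PSeries c x0 (CV_radius_bounded_seq c x0
                 (bounded_seq_trit c (fun k => admissible_trit p n a b Hp c k Hc))
                 ltac:(rewrite Rabs_pos_eq; lra))).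
  assert (Hl : PSeries (PS_derive c) x0 = 0).
  { apply (is_derive_interior_min (PSeries c) a b x0 _ Hx0'); [| exact Hd].
    intros z Hz. rewrite Hroot. apply Hc; lra. }
  rewrite Hl in Hd. exact Hd.
Qed.
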